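(* Let $L$ be a finite set of axis-aligned line segments in the plane, let $\mathcal{C}$ be the collection of associated subsets of the rectangular cells of the arrangement of $L$, and let $k\ge 0$ be an integer. Let $\mathcal{C}_1$ be obtained from $\mathcal{C}$ by, for every pair of segments $\ell,\ell'$ both contained in more than $2k$ subsets of $\mathcal{C}$, adding the subset $\{\ell,\ell'\}$ and removing all subsets containing both $\ell$ and $\ell'$. Let $\mathcal{C}_2$ be obtained from $\mathcal{C}_1$ by, for each segment $\ell$ contained in more than $2k^2$ subsets of $\mathcal{C}_1$, replacing all these subsets by the subset $\{\ell\}$. Then a set $L'\subseteq L$ with $|L'| \le k$ is a minimum-size cover of $\mathcal{C}_1$ if and only if it is a minimum-size cover of $\mathcal{C}_2$.
   Context: A cell of the arrangement of $L$ is a maximal connected region of the plane not intersected by any segment of $L$. A cell is rectangular if its boundary is formed by exactly four segments of $L$; its associated subset is the set of these four bounding segments. A set $L'\subseteq L$ is a cover of a collection $\mathcal{D}$ of subsets of $L$ if every member of $\mathcal{D}$ contains at least one element of $L'$. *)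

From HB Require Import structures.
From mathcomp Require Import all_boot all_order all_algebra.
From mathcomp Require Import all_classical all_reals all_analysis.
Set Implicit Arguments. Unset Strict Implicit. Unset Printing Implicit Defensive.
Import Order.TTheory GRing.Theory Num.Theory.
Import numFieldNormedType.Exports.
Local Open Scope classical_set_scope.
Local Open Scope ring_scope.

Section Geometry.
Variable R : realType.
Notation pt := (R * R)%type.

Definition seg_pts (p q : pt) : set pt :=
  [set z | (p.1 = q.1 /\ z.1 = p.1 /\
             Num.min p.2 q.2 <= z.2 /\ z.2 <= Num.max p.2 q.2) \/
           (p.2 = q.2 /\ z.2 = p.2 /\
             Num.min p.1 q.1 <= z.1 /\ z.1 <= Num.max p.1 q.1)].

Definition axis_seg (e : pt * pt) : Prop :=
  e.1 <> e.2 /\ (e.1.1 = e.2.1 \/ e.1.2 = e.2.2).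

Variable I : finType.        (* indices of the segments of L *)
Variable ep : I -> pt * pt.

Definition segL (i : I) : set pt := seg_pts (ep i).1 (ep i).2.

Definition covered : set pt := \bigcup_(i in [set: I]) segL i.

Definition is_cell (c : set pt) : Prop :=
  exists x, ~ covered x /\ c = connected_component (~` covered) x.

Definition boundary (c : set pt) : set pt := closure c `\` interior c.

(* segment i is one of the segments forming the boundary of c:
   it shares a non-degenerate piece (at least two points) with the boundary *)
Definition bounds (c : set pt) (i : I) : Prop :=
  exists z w, z <> w /\ (segL i `&` boundary c) z /\ (segL i `&` boundary c) w.

Definition bsegs (c : set pt) : {set I} := [set i | `[< bounds c i >]].

Definition bounded_region (c : set pt) : Prop :=
  exists M : R, forall z, c z -> `|z.1| <= M /\ `|z.2| <= M.

Definition rect_cell (c : set pt) : Prop :=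
  is_cell c /\ bounded_region c /\ #|bsegs c| = 4%N.

Definition Ccol : {set {set I}} :=
  [set S | `[< exists c, rect_cell c /\ bsegs c = S >]].

End Geometry.

Local Close Scope classical_set_scope.
Section Kernel.
Variable I : finType.

Definition deg (D : {set {set I}}) (i : I) : nat := #|[set S in D | i \in S]|.

Definition C1of (C : {set {set I}}) (k : nat) : {set {set I}} :=
  let h i := (2 * k < deg C i)%N in
  [set S in C | ~~ [exists i, exists j,
        [&& i != j, h i, h j, i \in S & j \in S]]]
  :|: [set S | [exists i, exists j, [&& i != j, h i, h j & S == [set i; j]]]].

Definition C2of (C1 : {set {set I}}) (k : nat) : {set {set I}} :=
  let h i := (2 * k ^ 2 < deg C1 i)%N in
  [set S in C1 | ~~ [exists i, h i && (i \in S)]]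
  :|: [set S | [exists i, h i && (S == [set i])]].

Definition is_cover (D : {set {set I}}) (L' : {set I}) : Prop :=
  forall S, S \in D -> S :&: L' != finset.set0.

Definition min_cover (D : {set {set I}}) (L' : {set I}) : Prop :=
  is_cover D L' /\ forall L'', is_cover D L'' -> (#|L'| <= #|L''|)%N.

End Kernel.

From HB Require Import structures.
From mathcomp Require Import all_boot all_order all_algebra.
From mathcomp Require Import all_classical all_reals all_analysis.
From mathcomp Require Import unstable zify.

Set Implicit Arguments.
Unset Strict Implicit.
Unset Printing Implicit Defensive.

(* In C1 two distinct segments lie together in at most max(1, 2k) members:
   if one of them lies in at most 2k members of C, all C1-members through it
   come from C; if both lie in more, the only common member left is the pair
   {l, l'}.  So a cover X of C1 with |X| <= k that misses l covers at most
   k * 2k = 2k^2 members through l.  Hence such a cover contains every segment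
   replaced in C2 and covers C2, while every cover of C2 covers C1. *)

Section Kernelization.
Variable I : finType.
Implicit Types (C D : {set {set I}}) (X : {set I}).

Definition codeg D (i j : I) : nat := #|[set S in D | (i \in S) && (j \in S)]|.

Lemma codegC D i j : codeg D i j = codeg D j i.
Proof. by apply: eq_card => S; rewrite !inE [(i \in S) && _]andbC. Qed.

Lemma deg_le_card_cover D X l b : is_cover D X ->
  (forall j, j \in X -> codeg D l j <= b)%N -> (deg D l <= #|X| * b)%N.
Proof.
move=> covX codegX.
have sub : [set S in D | l \in S] \subset
    \bigcup_(j in X) [set S in D | (l \in S) && (j \in S)].
  apply/fintype.subsetP => S; rewrite inE => /andP[SD lS].
  have /set0Pn[j] := covX S SD; rewrite inE => /andP[jS jX].
  by apply/bigcupP; exists j; rewrite // inE SD lS jS.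
rewrite /deg (leq_trans (subset_leq_card sub)) // (leq_trans (card_big_setU _ _ _)) //.
by rewrite -sum_nat_const leq_sum.
Qed.

Lemma min_cover_iff D1 D2 n X :
  (forall Y, is_cover D2 Y -> is_cover D1 Y) ->
  (forall Y, is_cover D1 Y -> (#|Y| <= n)%N -> is_cover D2 Y) ->
  (#|X| <= n)%N -> min_cover D1 X <-> min_cover D2 X.
Proof.
move=> cov21 cov12 Xn; split=> [[covX minX] | [covX minX]].
- by split=> [|Y /cov21]; [exact: cov12 | exact: minX].
- split=> [|Y covY]; first exact: cov21.
  have [Yn|/ltnW nY] := leqP #|Y| n; first exact/minX/cov12.
  exact: leq_trans nY.
Qed.

Variable k : nat.

Lemma mem_C1of_light C l S : (deg C l <= 2 * k)%N ->
  S \in C1of C k -> l \in S -> S \in C.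
Proof.
move=> hl; rewrite !inE => /orP[/andP[SC _] //|].
case/existsP=> i /existsP[j /and4P[_ hi hj /eqP->]].
by rewrite !inE => /orP[]/eqP El; move: hl; rewrite leqNgt El ?hi ?hj.
Qed.

Lemma C1of_heavy_pair C l j S : l != j ->
  (2 * k < deg C l)%N -> (2 * k < deg C j)%N ->
  S \in C1of C k -> l \in S -> j \in S -> S = [set l; j].
Proof.
move=> ljN hl hj; rewrite !inE => /orP[/andP[_ /existsPn noPair]|] lS jS.
  by have /existsPn/(_ j) := noPair l; rewrite ljN hl hj lS jS.
case/existsP: lS jS => i /existsP[i' /and4P[_ _ _ /eqP->]].
rewrite !inE => /orP[]/eqP El /orP[]/eqP Ej; subst l j.
all: by rewrite ?eqxx in ljN; rewrite // finset.setUC.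
Qed.

Lemma codeg_C1of C l j : l != j -> (codeg (C1of C k) l j <= maxn 1 (2 * k))%N.
Proof.
move=> ljN.
have light_bound a b : (deg C a <= 2 * k)%N -> (codeg (C1of C k) a b <= 2 * k)%N.
  move=> ha; apply: (@leq_trans (deg C a)) => //; apply/subset_leq_card/fintype.subsetP => S.
  by rewrite inE => /andP[SC1 /andP[aS _]]; rewrite inE aS (mem_C1of_light ha SC1 aS).
have [hl|hl] := leqP (deg C l) (2 * k).
  by rewrite (leq_trans (light_bound _ _ hl)) ?leq_maxr.
have [hj|hj] := leqP (deg C j) (2 * k).
  by rewrite codegC (leq_trans (light_bound _ _ hj)) ?leq_maxr.
rewrite (leq_trans _ (leq_maxl _ _)) // -(cards1 [set l; j]).
apply/subset_leq_card/fintype.subsetP => S; rewrite inE => /andP[SC1 /andP[lS jS]].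
by rewrite (C1of_heavy_pair ljN hl hj SC1 lS jS) inE.
Qed.

Lemma heavy_mem_small_cover C X l :
  is_cover (C1of C k) X -> (#|X| <= k)%N ->
  (2 * k ^ 2 < deg (C1of C k) l)%N -> l \in X.
Proof.
move=> covX Xk; apply: contraTT => lX; rewrite -leqNgt.
have degl : (deg (C1of C k) l <= #|X| * maxn 1 (2 * k))%N.
  apply: deg_le_card_cover covX _ => j jX; apply: codeg_C1of.
  by apply: contraNneq lX => ->.
apply: leq_trans degl _; nia.
Qed.

Lemma cover_of_C2of D X : is_cover (C2of D k) X -> is_cover D X.
Proof.
move=> covX S SD.
have [/existsP[i /andP[hi iS]] | noHeavy] :=
  boolP [exists i, (2 * k ^ 2 < deg D i)%N && (i \in S)].
- have /covX/set0Pn[x] : [set i] \in C2of D k.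
    by rewrite !inE; apply/orP; right; apply/existsP; exists i; rewrite hi eqxx.
  by rewrite !inE => /andP[/eqP-> iX]; apply/set0Pn; exists i; rewrite inE iS.
- by apply: covX; rewrite !inE SD noHeavy.
Qed.

Lemma C2of_cover D X : is_cover D X ->
  (forall l, 2 * k ^ 2 < deg D l -> l \in X)%N -> is_cover (C2of D k) X.
Proof.
move=> covX heavyX S; rewrite !inE => /orP[/andP[SD _]|]; first exact: covX.
case/existsP=> i /andP[hi /eqP->].
by apply/set0Pn; exists i; rewrite !inE eqxx heavyX.
Qed.

End Kernelization.

Theorem lemma4 (R : realType) (I : finType) (ep : I -> ((R * R) * (R * R))%type)
  (Hseg : forall i, axis_seg (ep i))
  (Hinj : forall i j, segL ep i = segL ep j -> i = j)
  (k : nat) (L' : {set I}) (HL' : (#|L'| <= k)%N) :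
  min_cover (C1of (Ccol ep) k) L' <-> min_cover (C2of (C1of (Ccol ep) k) k) L'.
Proof.
apply: min_cover_iff HL' => [Y|Y covY Yk]; first exact: cover_of_C2of.
apply: C2of_cover (covY) _ => l; exact: heavy_mem_small_cover covY Yk.
Qed.
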